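(* Let $n\ge 4$, $d\ge 2$, and $\mathbf h\in\mathbb{R}^{\binom{n+d-1}{d}}$ decomposed as $\mathbf h=(\mathbf h_0,\dots,\mathbf h_d)$. Suppose $\sum_{i=1}^{d-2}N(\mathbf h_i)+N(\mathbf h_d)=0$, $P(\mathbf h_d)=N(\mathbf h_{d-1})=2$, and $J_{n,d}\mathbf h\ge 0$. Then $R(J_{n,d}\mathbf h)\ge 3n-4$.
   Context: For a real vector $\mathbf x$, $P(\mathbf x)$, $N(\mathbf x)$, $R(\mathbf x)$ denote the numbers of positive, negative and nonzero components; inequalities are componentwise. $J_{m,j}$ is the matrix, with respect to the left lexicographic bases of degree-$j$ and degree-$(j+1)$ monomials in $m$ variables, of multiplication by the sum of the variables. If $\mathbf h$ is the coordinate vector of $A(x)=\sum_{j=0}^d x_1^{d-j}A_j(x_2,\dots,x_n)$ ($A_j$ homogeneous of degree $j$), then $\mathbf h_j$ is the coordinate vector of $A_j$ in the left lexicographic basis of degree-$j$ monomials in $x_2,\dots,x_n$. *)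

From HB Require Import structures.
From mathcomp Require Import all_boot all_order all_algebra.
From mathcomp Require Export mpoly.
Set Implicit Arguments. Unset Strict Implicit. Unset Printing Implicit Defensive.
Import Order.TTheory GRing.Theory Num.Theory.
Local Open Scope ring_scope.

(* Variables x_1,...,x_n are 'X_i for i : 'I_n, x_1 being index 0.
   A coordinate vector h in R^{C(n+d-1,d)} is identified with the
   coefficients of a homogeneous degree-d polynomial A; J_{n,d} h is the
   coefficient vector of (x_1+...+x_n) * A. *)

Definition tdeg (n : nat) (m : 'X_{1..n}) : nat :=
  (\sum_(i < n | val i != 0%N) m i)%N.

Definition sumvars (R : nzRingType) (n : nat) : {mpoly R[n]} := \sum_(i < n) 'X_i.

Definition is_homog_deg (R : nzRingType) (n d : nat) (A : {mpoly R[n]}) : Prop :=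
  forall m : 'X_{1..n}, mdeg m != d -> A@_m = 0.

(* N(h_j): number of negative entries of the block h_j (degree-d monomials of
   degree j in x_2..x_n, i.e. x_1^{d-j} * monomial of degree j) *)
Definition Nblock (R : realFieldType) (n d : nat) (A : {mpoly R[n]}) (j : nat) : nat :=
  #|[set m : 'X_{1..n < d.+1} | (mdeg m == d) && (tdeg m == j) && (A@_m < 0)]|.

Definition Pblock (R : realFieldType) (n d : nat) (A : {mpoly R[n]}) (j : nat) : nat :=
  #|[set m : 'X_{1..n < d.+1} | (mdeg m == d) && (tdeg m == j) && (0 < A@_m)]|.

Definition Jnonneg (R : realFieldType) (n : nat) (A : {mpoly R[n]}) : Prop :=
  forall m : 'X_{1..n}, 0 <= (sumvars R n * A)@_m.

Definition RJ (R : realFieldType) (n d : nat) (A : {mpoly R[n]}) : nat :=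
  #|[set m : 'X_{1..n < d.+2} | (mdeg m == d.+1) && ((sumvars R n * A)@_m != 0)]|.

From mathcomp Require Import all_boot all_order all_algebra.
From mathcomp Require Import mpoly.
From mathcomp Require Import zify.
From Stdlib Require Import Classical_Prop.
Import Order.TTheory GRing.Theory Num.Theory.
Set Implicit Arguments. Unset Strict Implicit. Unset Printing Implicit Defensive.
Local Open Scope multi_scope.
Local Open Scope ring_scope.

(* Let c z be the coefficient of z in (x_1 + ... + x_n) A, so that c z is the sum of the
   A_(z - e_l), and sort the monomials with c z <> 0 by their exponent of x_1.
   Exponent 0: only x_1-free coefficients of A, all nonnegative, enter c z; hence
   c (m + e_k) > 0 for the two positive ones m and all k <> 1, giving 2(n-1) - 1 monomials.
   Exponent at least 2: c (w + e_1) = A_w for w of maximal x_1-degree in the support of A.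
   Exponent 1: for k <> 1 pick u_k in the support, of x_1-degree one, with maximal exponent
   of x_k. At the vertex u_k + e_k only u_k and the x_1-free partner u_k + e_k - e_1
   contribute, so if c vanishes there the partner is one of the two positive x_1-free
   monomials; partners of distinct k are distinct, so at most two vertices i, j cancel.
   If two do, the fact that only two coefficients of x_1-degree one are negative produces
   one more nonzero coefficient of x_1-degree one, away from the remaining vertices.
   Either way this slice has n - 2 elements, and (2n - 3) + 1 + (n - 2) = 3n - 4. *)

Section MonomialFacts.
Variable n : nat.
Implicit Types (m z : 'X_{1..n}) (k l : 'I_n).

Lemma mnm1_inj : injective (fun k => U_(k) : 'X_{1..n}).
Proof. by move=> k l /mnmP/(_ l); rewrite !mnm1E eqxx; case: eqP. Qed.

Lemma addm1_inj m : injective (fun k => (m + U_(k))%MM).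
Proof. by move=> k l /addmI /mnm1_inj. Qed.

Lemma mdegDU m k : mdeg (m + U_(k))%MM = (mdeg m).+1.
Proof. by rewrite mdegD mdeg1 addn1. Qed.

Lemma addm1_cross (a b : 'X_{1..n}) k l k' l' : a != b ->
  (a + U_(k) = b + U_(l))%MM -> (a + U_(k') = b + U_(l'))%MM -> k = k'.
Proof.
move=> ab e1 e2; have kl : k != l.
  by apply: contra_neq ab => kl; move: e1; rewrite kl; apply: addIm.
move/mnmP: e1 => /(_ k); move/mnmP: e2 => /(_ k); rewrite !(mnmDE, mnm1E) eqxx.
rewrite [l == k]eq_sym (negbTE kl); case: (k' =P k) => // _; case: (l' =P k) => _ /=; lia.
Qed.

Definition bmnm_of b m : 'X_{1..n < b.+1} := insubd bm0 m.

Lemma bmnm_ofK b m : (mdeg m <= b)%N -> bmnm_of b m = m :> 'X_{1..n}.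
Proof. by move=> hm; rewrite /bmnm_of insubdK // unfold_in /= ltnS. Qed.

End MonomialFacts.

Section MpolyFacts.
Variables (R : nzRingType) (n : nat).
Implicit Types (p : {mpoly R[n]}) (m z : 'X_{1..n}).

Lemma mcoeffXiM p (i : 'I_n) z :
  ('X_i * p)@_z = if (U_(i) <= z)%MM then p@_(z - U_(i)) else 0.
Proof.
rewrite -commr_mpolyX; case: ifP => h; first by rewrite -{1}(submK h) addmC mcoeffMX.
apply: memN_msupp_eq0; rewrite (perm_mem (msuppMX _ _)).
by apply/mapP => -[m' _ zE]; move: h; rewrite zE lem_addr.
Qed.

Lemma mcoeff_sumvarsM p z :
  (sumvars R n * p)@_z = \sum_(i < n) if (U_(i) <= z)%MM then p@_(z - U_(i)) else 0.
Proof.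
rewrite /sumvars mulr_suml raddf_sum; apply: eq_bigr => i _.
exact: mcoeffXiM.
Qed.

Lemma msupp_argmax p (P : pred 'X_{1..n}) (f : 'X_{1..n} -> nat) m0 :
  (forall m, P m -> p@_m != 0) -> P m0 ->
  {m | P m & forall m', P m' -> (f m' <= f m)%N}.
Proof.
move=> suppP Pm0; pose s := [seq m <- msupp p | P m].
have mem_s m : P m -> m \in s by move=> Pm; rewrite mem_filter Pm mcoeff_msupp suppP.
pose i := [arg max_(i > Ordinal (etrans (index_mem m0 s) (mem_s _ Pm0)) : 'I_(size s))
             f (nth m0 s i)].
have : nth m0 s i \in s by apply: mem_nth.
rewrite mem_filter => /andP[Pm _]; exists (nth m0 s i) => // m' Pm'.
have s_m' := mem_s _ Pm'.
rewrite /i; case: arg_maxnP => // j _ /(_ (Ordinal (etrans (index_mem m' s) s_m')) isT).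
by rewrite /= nth_index.
Qed.

End MpolyFacts.

Lemma mem_pair_subset (T : eqType) (a b x y z : T) :
  a != b -> {subset [:: a; b] <= [:: x; y]} -> z \in [:: x; y] -> z \in [:: a; b].
Proof.
move=> ab sub; have uniq_ab : uniq [:: a; b] by rewrite /= inE ab.
by have [_ ->] := uniq_min_size uniq_ab sub (leqnn 2).
Qed.

Lemma big_split2 (V : nmodType) (I : finType) (F : I -> V) (a b : I) : a != b ->
  \sum_i F i = F a + F b + \sum_(i | (i != a) && (i != b)) F i.
Proof.
move=> ab; rewrite (bigD1 a) //= (bigD1 b) 1?eq_sym //= addrA.
by congr (_ + _); apply: eq_bigl => i; rewrite andbC.
Qed.

Ltac mnm_coord :=
  rewrite ?(mnmBE, mnmDE, mnm1E);
  repeat match goal with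
  | H : is_true (?a != ?b) |- context [?a == ?b] => rewrite (negbTE H)
  | H : is_true (?a != ?b) |- context [?b == ?a] => rewrite [b == a]eq_sym (negbTE H)
  end;
  rewrite ?eqxx ?addn0 ?subn0 ?addnK ?addn1.

Section Coefficients.
Variables (R : realFieldType) (n d : nat) (A : {mpoly R[n]}) (i0 : 'I_n).
Implicit Types (m v w z : 'X_{1..n}) (k l t : 'I_n).
Hypothesis homA : forall m, A@_m != 0 -> mdeg m = d.

Local Notation c z := ((sumvars R n * A)@_z).

Definition coef_term z l := if (U_(l) <= z)%MM then A@_(z - U_(l)) else 0.

Lemma coefE z : c z = \sum_l coef_term z l.
Proof. exact: mcoeff_sumvarsM. Qed.

Lemma coef_termE z l : z l != 0%N -> coef_term z l = A@_(z - U_(l)).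
Proof. by rewrite /coef_term lep1mP => ->. Qed.

Lemma coef_termDU v k : coef_term (v + U_(k)) k = A@_v.
Proof. by rewrite coef_termE ?addmK //; mnm_coord. Qed.

Definition RJset := [set z : 'X_{1..n < d.+2} | (mdeg z == d.+1) && (c z != 0)].

Definition RJslice (P : pred nat) := [set z in RJset | P ((z : 'X_{1..n}) i0)].

Lemma bmnm_RJslice (P : pred nat) z : mdeg z = d.+1 -> c z != 0 -> P (z i0) ->
  bmnm_of d.+1 z \in RJslice P.
Proof. by move=> dz cz Pz; rewrite !inE bmnm_ofK ?dz // eqxx cz. Qed.

Lemma card_RJslices :
  (#|RJslice (pred1 0%N)| + #|RJslice (pred1 1%N)| + #|RJslice (leq 2)| <= #|RJset|)%N.
Proof.
pose E e := [set z : 'X_{1..n < d.+2} | (z : 'X_{1..n}) i0 == e].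
rewrite -(cardsID (E 0%N) RJset) -(cardsID (E 1%N) (RJset :\: E 0%N)) addnA.
do 2?apply: leq_add; apply: subset_leq_card; apply/subsetP => z; rewrite !inE.
- by [].
- by case/andP=> -> /eqP ->.
- case/andP=> -> lt1; rewrite !andbT.
  by apply/andP; split; apply/eqP => e; rewrite e in lt1.
Qed.

Lemma card_RJslice_high v : A@_v != 0 -> (0 < v i0)%N -> (0 < #|RJslice (leq 2)|)%N.
Proof.
move=> Av v_pos.
have [w Aw w_max] := @msupp_argmax _ _ A (fun m => A@_m != 0) (fun m => m i0) _ (fun m => id) Av.
have w_pos : (0 < w i0)%N := leq_trans v_pos (w_max v Av).
have cw : c (w + U_(i0))%MM = A@_w.
  rewrite coefE (bigD1 i0) //= coef_termDU big1 ?addr0 // => l li.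
  rewrite /coef_term; case: ifP => // _; apply/eqP; apply: contraT => /w_max.
  by mnm_coord; rewrite ltnn.
apply/card_gt0P; exists (bmnm_of d.+1 (w + U_(i0))%MM).
by rewrite bmnm_RJslice ?mdegDU ?homA ?cw //=; mnm_coord.
Qed.

Hypothesis x1free_ge0 : forall m, m i0 = 0%N -> 0 <= A@_m.

Lemma coef_x1free_shift_gt0 m k : m i0 = 0%N -> 0 < A@_m -> k != i0 -> 0 < c (m + U_(k))%MM.
Proof.
move=> m0 Am ki; rewrite coefE (bigD1 k) //= coef_termDU ltr_pwDl // sumr_ge0 // => l _.
rewrite /coef_term; case: ifP => // _; apply: x1free_ge0; mnm_coord; rewrite m0.
by case: (l == i0).
Qed.

Variables m1 m2 : 'X_{1..n}.
Hypothesis x1free_supp : forall m, ((m i0 == 0%N) && (A@_m != 0)) = (m \in [:: m1; m2]).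
Hypothesis m12 : m1 != m2.

Lemma x1free_suppP m : m \in [:: m1; m2] -> [/\ m i0 = 0%N, 0 < A@_m & mdeg m = d].
Proof.
rewrite -x1free_supp => /andP[/eqP m0 Am]; split => //; last exact: homA.
by rewrite lt_def Am x1free_ge0.
Qed.

Lemma card_RJslice0 : ((2 * n.-1).-1 <= #|RJslice (pred1 0%N)|)%N.
Proof.
pose K := [set~ i0]; pose X m := [set bmnm_of d.+1 (m + U_(k))%MM | k in K].
have valX m k : m \in [:: m1; m2] -> bmnm_of d.+1 (m + U_(k))%MM = (m + U_(k))%MM :> 'X_{1..n}.
  by case/x1free_suppP=> _ _ dm; rewrite bmnm_ofK // mdegDU dm.
have cardX m : m \in [:: m1; m2] -> #|X m| = n.-1.
  move=> mm; rewrite card_in_imset ?cardsC1 ?card_ord // => k l _ _ /(congr1 val).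
  by rewrite /= !valX //; apply: addm1_inj.
have subX m : m \in [:: m1; m2] -> X m \subset RJslice (pred1 0%N).
  move=> mm; have [m0 Am dm] := x1free_suppP mm.
  apply/subsetP => y /imsetP[k ki ->]; rewrite !inE in ki.
  rewrite bmnm_RJslice ?mdegDU ?dm ?lt0r_neq0 ?coef_x1free_shift_gt0 //=.
  by mnm_coord; rewrite m0.
have m1X : m1 \in [:: m1; m2] by rewrite mem_head.
have m2X : m2 \in [:: m1; m2] by rewrite !inE eqxx orbT.
have capX : (#|X m1 :&: X m2| <= 1)%N.
  apply/card_le1_eqP => y y' /setIP[/imsetP[k _ ->] /imsetP[l _ /(congr1 val)]].
  rewrite /= !valX // => e1 /setIP[/imsetP[k' _ ->] /imsetP[l' _ /(congr1 val)]].
  by rewrite /= !valX // => e2; rewrite (addm1_cross m12 e1 e2).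
have subX12 : X m1 :|: X m2 \subset RJslice (pred1 0%N) by rewrite subUset !subX.
by apply: leq_trans (subset_leq_card subX12); rewrite cardsU !cardX //; lia.
Qed.

Hypothesis c_ge0 : forall z, 0 <= c z.
Variables n1 n2 : 'X_{1..n}.
Hypothesis x1deg1_neg : forall m, ((m i0 == 1%N) && (A@_m < 0)) = (m \in [:: n1; n2]).

Definition supp1 v := (v i0 == 1%N) && (A@_v != 0).

Lemma supp1_x1deg v : supp1 v -> v i0 = 1%N.
Proof. by case/andP=> /eqP. Qed.

Lemma supp1_neq0 v : supp1 v -> A@_v != 0.
Proof. by case/andP. Qed.

Lemma supp1_n1 : supp1 n1.
Proof.
have /andP[n1_1 n1_neg] : (n1 i0 == 1%N) && (A@_n1 < 0) by rewrite x1deg1_neg mem_head.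
by rewrite /supp1 n1_1 ltr0_neq0.
Qed.

Lemma coef_term_eq0 z l : z i0 = 1%N -> l != i0 -> ~~ supp1 (z - U_(l)) ->
  coef_term z l = 0.
Proof.
move=> z1 li; rewrite /coef_term /supp1; case: ifP => // _.
by mnm_coord; rewrite z1 /= negbK => /eqP.
Qed.

Definition top k : 'X_{1..n} :=
  s2val (@msupp_argmax _ _ A supp1 (fun v => v k) _ supp1_neq0 supp1_n1).

Definition height k := top k k.

Lemma supp1_top k : supp1 (top k).
Proof. by rewrite /top; case: msupp_argmax. Qed.

Lemma le_height k v : supp1 v -> (v k <= height k)%N.
Proof. by rewrite /height /top; case: msupp_argmax => w ? w_max /w_max. Qed.

Lemma top_x1deg k : top k i0 = 1%N.
Proof. exact: supp1_x1deg (supp1_top k). Qed.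

Lemma coef_above_height z k : k != i0 -> z i0 = 1%N -> z k = (height k).+1 ->
  c z = A@_(z - U_(i0)) + A@_(z - U_(k)).
Proof.
move=> ki z1 zk; rewrite coefE (big_split2 _ (_ : i0 != k)) 1?eq_sym //.
rewrite !coef_termE ?z1 ?zk // big1 ?addr0 // => l /andP[li lk].
apply: coef_term_eq0 => //; apply/negP => /(le_height k).
by mnm_coord; rewrite zk ltnn.
Qed.

Lemma coef_at_height v k : k != i0 -> supp1 v -> v k = height k ->
  c (v + U_(k))%MM = A@_(v + U_(k) - U_(i0)) + A@_v.
Proof.
move=> ki sv vk; rewrite (coef_above_height ki) ?addmK //; mnm_coord.
  by rewrite supp1_x1deg.
by rewrite vk.
Qed.

Definition vertex k := (top k + U_(k))%MM.

Definition partner k := (vertex k - U_(i0))%MM.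

Lemma vertex_x1deg k : k != i0 -> vertex k i0 = 1%N.
Proof. by move=> ki; rewrite /vertex; mnm_coord; rewrite top_x1deg. Qed.

Lemma mdeg_vertex k : mdeg (vertex k) = d.+1.
Proof. by rewrite mdegDU homA // supp1_neq0 // supp1_top. Qed.

Lemma vertex_inj : injective vertex.
Proof.
move=> k l /mnmP/(_ k); rewrite /vertex; mnm_coord.
case: eqP => // /eqP lk; rewrite addn0 => e.
by have := le_height k (supp1_top l); rewrite -e ltnn.
Qed.

Lemma partner_x1free k : k != i0 -> partner k i0 = 0%N.
Proof. by move=> ki; rewrite /partner /vertex; mnm_coord; rewrite top_x1deg. Qed.

Lemma partner_coord k t : t != i0 -> partner k t = (top k t + (k == t))%N.
Proof. by move=> ti; rewrite /partner /vertex; mnm_coord. Qed.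

Lemma partner_inj k l : k != i0 -> partner k = partner l -> k = l.
Proof.
move=> ki /mnmP/(_ k); rewrite !partner_coord // eqxx.
case: eqP => // /eqP lk; rewrite addn0 addn1 => e.
by have := le_height k (supp1_top l); rewrite -e ltnn.
Qed.

Lemma partner_cancel v k : v i0 = 1%N -> (v + U_(k) - U_(i0))%MM = partner k -> v = top k.
Proof.
move=> v1 /mnmP e; apply/mnmP => t; have := e t; rewrite /partner /vertex; mnm_coord.
by case: (i0 =P t) => [<- _|_]; [rewrite v1 top_x1deg | rewrite !subn0 => /addIn].
Qed.

Lemma coef_vertex k : k != i0 -> c (vertex k) = A@_(partner k) + A@_(top k).
Proof. by move=> ki; rewrite (coef_at_height ki) ?supp1_top. Qed.

Definition cancels k := (k != i0) && (c (vertex k) == 0).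

Lemma cancels_partner k : cancels k -> A@_(partner k) = - A@_(top k).
Proof. by case/andP=> ki; rewrite coef_vertex // addr_eq0 => /eqP. Qed.

Lemma cancels_partner_neq0 k : cancels k -> A@_(partner k) != 0.
Proof. by move/cancels_partner->; rewrite oppr_eq0 supp1_neq0 ?supp1_top. Qed.

Lemma cancels_partner_supp k : cancels k -> partner k \in [:: m1; m2].
Proof.
move=> ck; have /andP[ki _] := ck.
by rewrite -x1free_supp partner_x1free // eqxx cancels_partner_neq0.
Qed.

Lemma cancels_top_lt0 k : cancels k -> A@_(top k) < 0.
Proof.
move=> ck; have /andP[ki _] := ck.
have [_ + _] := x1free_suppP (cancels_partner_supp ck).
by rewrite cancels_partner // oppr_gt0.
Qed.

(* The height bound keeps z distinct from every vertex k outside {i0, i, j}. *)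
Definition extra_point i j z := [/\ z i0 = 1%N, mdeg z = d.+1, c z != 0 &
  forall t, t != i0 -> t != i -> t != j -> (z t <= height t)%N].

Lemma extra_pointC i j z : extra_point i j z -> extra_point j i z.
Proof. by case=> z1 dz cz zt; split=> // t t0 tj ti; apply: zt. Qed.

Section TwoCancellations.
Variables i j : 'I_n.
Hypotheses (ci : cancels i) (cj : cancels j) (ij : i != j).

Lemma x1free_supp_partners m : m i0 = 0%N -> A@_m != 0 -> m \in [:: partner i; partner j].
Proof.
move=> m0 Am; have [ii0 _] := andP ci.
apply: (mem_pair_subset (x := m1) (y := m2)); last by rewrite -x1free_supp m0 eqxx.
  by apply: contra_neq ij => /partner_inj; apply.
by move=> x /predU1P[->|/predU1P[->|//]]; apply: cancels_partner_supp.
Qed.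

Lemma cancels_two k : cancels k -> (k == i) || (k == j).
Proof.
move=> ck; have /andP[ki _] := ck.
move: (x1free_supp_partners (partner_x1free ki) (cancels_partner_neq0 ck)).
by rewrite !inE => /orP[]/eqP/(partner_inj ki)->; rewrite eqxx ?orbT.
Qed.

Lemma extra_point_second_top v : supp1 v -> v i = height i -> v != top i ->
  extra_point i j (v + U_(i)).
Proof.
move=> sv vi vtop; have /andP[ii0 _] := ci; have /andP[ji0 _] := cj.
have v1 := supp1_x1deg sv.
have A0 : A@_(v + U_(i) - U_(i0)) = 0.
  apply/eqP; apply: contraT => nz.
  have w0 : (v + U_(i) - U_(i0))%MM i0 = 0%N by mnm_coord; rewrite v1.
  move: (x1free_supp_partners w0 nz); rewrite !inE => /orP[/eqP/(partner_cancel v1)/eqP|].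
    by rewrite (negbTE vtop).
  move=> /eqP/mnmP/(_ j); rewrite partner_coord //; mnm_coord => vj.
  by have := le_height j sv; rewrite vj ltnn.
split.
- by mnm_coord; rewrite v1.
- by rewrite mdegDU homA // supp1_neq0.
- by rewrite (coef_at_height ii0 sv vi) A0 add0r supp1_neq0.
- by move=> t _ ti _; mnm_coord; apply: le_height.
Qed.

Section UniqueTops.
Variable k : 'I_n.
Hypotheses (ki0 : k != i0) (ki : k != i) (kj : k != j).
Hypothesis uniq_top_i : forall v, supp1 v -> v i = height i -> v = top i.
Hypothesis uniq_top_j : forall v, supp1 v -> v j = height j -> v = top j.

Lemma x1free_shift_eq0 : (top j k <= top i k)%N -> A@_(top i + U_(k) - U_(i0)) = 0.
Proof.
move=> le_ji; have /andP[ii0 _] := ci; have /andP[ji0 _] := cj.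
apply/eqP; apply: contraT => nz.
have w0 : (top i + U_(k) - U_(i0))%MM i0 = 0%N by mnm_coord; rewrite top_x1deg.
move: (x1free_supp_partners w0 nz); rewrite !inE => /orP[]/eqP/mnmP/(_ k).
all: by rewrite partner_coord //; mnm_coord; lia.
Qed.

Lemma tops_neq : top i != top j.
Proof.
apply/eqP => tij; have /andP[ii0 _] := ci.
have z1 : (top i + U_(k))%MM i0 = 1%N by mnm_coord; rewrite top_x1deg.
have rest : \sum_(l | (l != i0) && (l != k)) coef_term (top i + U_(k)) l = 0.
  apply: big1 => l /andP[li0 lk]; apply: coef_term_eq0 => //; apply/negP => sw.
  suff : (top i + U_(k) - U_(l))%MM = top i.
    by move/mnmP/(_ k); mnm_coord => /esym/n_Sn.
  have [li|li] := eqVneq l i.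
    by rewrite {2}tij; apply: uniq_top_j => //; rewrite li; mnm_coord; rewrite tij.
  by apply: uniq_top_i => //; mnm_coord.
have := c_ge0 (top i + U_(k))%MM.
rewrite coefE (big_split2 _ (_ : i0 != k)) 1?eq_sym // coef_termE ?z1 //.
by rewrite rest x1free_shift_eq0 ?tij // coef_termDU add0r addr0 leNgt cancels_top_lt0.
Qed.

Lemma supp1_neg_tops w : w i0 = 1%N -> A@_w < 0 -> w \in [:: top i; top j].
Proof.
move=> w1 wneg; apply: (mem_pair_subset (x := n1) (y := n2) tops_neq); last first.
  by rewrite -x1deg1_neg w1 eqxx.
move=> x /predU1P[->|/predU1P[->|//]]; rewrite -x1deg1_neg top_x1deg eqxx.
all: exact: cancels_top_lt0.
Qed.

Lemma top_lt_height : (top i k < height k)%N.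
Proof.
rewrite ltn_neqAle le_height ?supp1_top // andbT; apply/eqP => tk.
have := c_ge0 (top i + U_(k))%MM.
rewrite (coef_at_height ki0 (supp1_top i) tk) x1free_shift_eq0 ?tk ?le_height ?supp1_top //.
by rewrite add0r leNgt cancels_top_lt0.
Qed.

Lemma coef_swap : c (top i + U_(j))%MM = 0 -> A@_(top i + U_(j) - U_(i)) = - A@_(top i).
Proof.
have /andP[ii0 _] := ci; have /andP[ji0 _] := cj.
have z1 : (top i + U_(j))%MM i0 = 1%N by mnm_coord; rewrite top_x1deg.
have A0 : A@_(top i + U_(j) - U_(i0)) = 0.
  apply/eqP; apply: contraT => nz.
  have w0 : (top i + U_(j) - U_(i0))%MM i0 = 0%N by mnm_coord; rewrite top_x1deg.
  move: (x1free_supp_partners w0 nz); rewrite !inE => /orP[]/eqP.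
    by move/mnmP/(_ i); rewrite partner_coord //; mnm_coord; lia.
  by move/(partner_cancel (top_x1deg i))/eqP; rewrite (negbTE tops_neq).
have rest : \sum_(l | (l != i0) && (l != j)) coef_term (top i + U_(j)) l
            = coef_term (top i + U_(j)) i.
  rewrite (bigD1 i) /=; last by rewrite ii0 ij.
  rewrite big1 ?addr0 // => l /andP[/andP[li0 lj] li].
  apply: coef_term_eq0 => //; apply/negP => sw.
  have : (top i + U_(j) - U_(l))%MM = top i by apply: uniq_top_i => //; mnm_coord.
  by move/mnmP/(_ j); mnm_coord => /esym/n_Sn.
rewrite coefE (big_split2 _ (_ : i0 != j)) 1?eq_sym // coef_termE ?z1 //.
rewrite A0 coef_termDU rest add0r /coef_term; case: ifP => _; last first.
  by rewrite addr0 => /eqP; rewrite (negbTE (supp1_neq0 (supp1_top i))).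
by rewrite addrC => /eqP; rewrite addr_eq0 => /eqP.
Qed.

Let swap := (top i + U_(j) - U_(i))%MM.

Lemma swap_coord t : t != i -> t != j -> swap t = top i t.
Proof. by move=> ti tj; rewrite /swap; mnm_coord. Qed.

Lemma swap_gt0 : c (top i + U_(j))%MM = 0 -> 0 < A@_swap.
Proof. by move/coef_swap->; rewrite oppr_gt0 cancels_top_lt0. Qed.

Lemma coef_swap_shift_gt0 : c (top i + U_(j))%MM = 0 -> 0 < c (swap + U_(k))%MM.
Proof.
move=> cz; have /andP[ii0 _] := ci; have /andP[ji0 _] := cj.
have swap_pos := swap_gt0 cz.
have swap1 : swap i0 = 1%N by rewrite swap_coord ?top_x1deg // eq_sym.
have swap_j : swap j = (top i j).+1 by rewrite /swap; mnm_coord.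
have sswap : supp1 swap by rewrite /supp1 swap1 eqxx lt0r_neq0.
have z1 : (swap + U_(k))%MM i0 = 1%N by mnm_coord; rewrite top_x1deg.
rewrite coefE (big_split2 _ (_ : i0 != k)) 1?eq_sym // coef_termDU addrAC.
apply: (lt_le_trans swap_pos); rewrite lerDr addr_ge0 //.
  by rewrite coef_termE ?z1 //; apply: x1free_ge0; mnm_coord; rewrite top_x1deg.
apply: sumr_ge0 => l /andP[li0 lk]; rewrite /coef_term; case: ifP => // _.
rewrite leNgt; apply/negP => neg.
have w1 : (swap + U_(k) - U_(l))%MM i0 = 1%N by mnm_coord; rewrite top_x1deg.
move: (supp1_neg_tops w1 neg); rewrite !inE => /orP[]/eqP/mnmP.
  by move/(_ k); mnm_coord => /esym/n_Sn.
have [-> /(_ j)|lj /(_ j)] := eqVneq l j; mnm_coord => tj.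
  by move/eqP: tops_neq; apply; apply: uniq_top_j (supp1_top i) tj.
have /(uniq_top_j sswap) swap_top := etrans swap_j tj.
by have := swap_pos; rewrite swap_top ltNge ltW // cancels_top_lt0.
Qed.

Lemma extra_point_unique_tops : exists z, extra_point i j z.
Proof.
have /andP[ii0 _] := ci; have /andP[ji0 _] := cj.
have [cz|cz] := eqVneq (c (top i + U_(j))%MM) 0; last first.
  exists (top i + U_(j))%MM; split => //.
  - by mnm_coord; rewrite top_x1deg.
  - by rewrite mdegDU homA // supp1_neq0 ?supp1_top.
  - by move=> t _ _ tj; mnm_coord; apply/le_height/supp1_top.
exists (swap + U_(k))%MM; split.
- by mnm_coord; rewrite top_x1deg.
- by rewrite mdegDU homA // lt0r_neq0 // swap_gt0.
- by rewrite lt0r_neq0 // coef_swap_shift_gt0.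
- move=> t t0 ti tj; mnm_coord.
  have [<-|kt] := eqVneq k t; mnm_coord; first exact: top_lt_height.
  exact/le_height/supp1_top.
Qed.

End UniqueTops.

End TwoCancellations.

Lemma exists_extra_point i j k : cancels i -> cancels j -> i != j ->
  k != i0 -> k != i -> k != j -> exists z, extra_point i j z.
Proof.
move=> ci cj ij ki0 ki kj.
have [[v [sv vi vt]]|uniq_i] := classic (exists v, [/\ supp1 v, v i = height i & v != top i]).
  by exists (v + U_(i))%MM; apply: extra_point_second_top.
have [[v [sv vj vt]]|uniq_j] := classic (exists v, [/\ supp1 v, v j = height j & v != top j]).
  by exists (v + U_(j))%MM; apply/extra_pointC/extra_point_second_top; rewrite // eq_sym.
apply: (extra_point_unique_tops ci cj ij ki0 ki kj).
  by move=> v sv vi; case: (eqVneq v (top i)) => // vt; case: uniq_i; exists v.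
by move=> v sv vj; case: (eqVneq v (top j)) => // vt; case: uniq_j; exists v.
Qed.

Definition vertex_set (G : {set 'I_n}) := [set bmnm_of d.+1 (vertex k) | k in G].

Definition cancel_set := [set k | cancels k].

Definition live := [set k | (k != i0) && ~~ cancels k].

Lemma live_neq k l : k \in live -> cancels l -> k != l.
Proof. by rewrite inE => /andP[_ kc] cl; apply: contraNneq kc => ->. Qed.

Lemma vertex_set_RJslice1 : vertex_set live \subset RJslice (pred1 1%N).
Proof.
apply/subsetP => _ /imsetP[k + ->]; rewrite inE => /andP[ki0 kc].
by rewrite bmnm_RJslice ?mdeg_vertex ?vertex_x1deg //; move: kc; rewrite /cancels ki0.
Qed.

Lemma card_vertex_set G : #|vertex_set G| = #|G|.
Proof.
apply: card_imset => k l /(congr1 val) /=; rewrite !bmnm_ofK ?mdeg_vertex //.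
exact: vertex_inj.
Qed.

Lemma card_live : (#|live| + #|cancel_set| = n.-1)%N.
Proof.
have <- : #|[set~ i0]| = n.-1 by rewrite cardsC1 card_ord.
rewrite -(cardsID cancel_set [set~ i0]) addnC.
by congr (_ + _)%N; apply: eq_card => k; rewrite !inE /cancels; case: (k != i0); rewrite ?andbT.
Qed.

Lemma card_RJslice1 : (4 <= n)%N -> (n - 2 <= #|RJslice (pred1 1%N)|)%N.
Proof.
move=> n4; have le_slice := subset_leq_card vertex_set_RJslice1.
rewrite card_vertex_set in le_slice.
have [le1_cancel|/card_gt1P[i [j [ci cj ij]]]] := leqP #|cancel_set| 1.
  apply: leq_trans le_slice; rewrite -(addnK #|cancel_set| #|live|) card_live.
  by rewrite -subn1 -subnDA leq_sub2l // add1n ltnS.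
rewrite !inE in ci cj.
have cancelsE : cancel_set = [set i; j].
  by apply/setP => k; rewrite !inE; apply/idP/idP => [/(cancels_two ci cj ij)|/orP[]/eqP->].
have card_live2 : #|live| = (n.-1 - 2)%N by rewrite -card_live cancelsE cards2 ij addnK.
have [k kL] : exists k, k \in live by apply/card_gt0P; rewrite card_live2 subn_gt0 ltn_predRL.
have /andP[ki0 _] : (k != i0) && ~~ cancels k by rewrite inE in kL.
have [z [z1 dz cz z_le]] := exists_extra_point ci cj ij ki0 (live_neq kL ci) (live_neq kL cj).
have zV : bmnm_of d.+1 z \notin vertex_set live.
  apply/imsetP => -[l lL /(congr1 val)]; rewrite /= !bmnm_ofK ?dz ?mdeg_vertex // => zl.
  have /andP[li0 _] : (l != i0) && ~~ cancels l by rewrite inE in lL.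
  have := z_le l li0 (live_neq lL ci) (live_neq lL cj).
  by rewrite zl /vertex; mnm_coord; rewrite ltnn.
have sub : bmnm_of d.+1 z |: vertex_set live \subset RJslice (pred1 1%N).
  by rewrite subUset sub1set vertex_set_RJslice1 bmnm_RJslice //= z1.
by have := subset_leq_card sub; rewrite cardsU1 zV card_vertex_set card_live2; lia.
Qed.

Lemma card_RJset_ge : (4 <= n)%N -> (3 * n - 4 <= #|RJset|)%N.
Proof.
move=> n4; apply: leq_trans card_RJslices.
have n1_pos : (0 < n1 i0)%N by rewrite supp1_x1deg ?supp1_n1.
have := card_RJslice_high (supp1_neq0 supp1_n1) n1_pos.
by have := card_RJslice0; have := card_RJslice1 n4; lia.
Qed.

End Coefficients.

Section Blocks.
Variables (R : realFieldType) (n d : nat) (A : {mpoly R[n]}).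
Implicit Types (P : pred R) (m : 'X_{1..n}).

Definition block_set P j :=
  [set m : 'X_{1..n < d.+1} | (mdeg m == d) && (tdeg m == j) && P A@_m].

Lemma mem_block_set P j m : mdeg m = d ->
  (bmnm_of d m \in block_set P j) = (tdeg m == j) && P A@_m.
Proof. by move=> dm; rewrite inE bmnm_ofK ?dm // eqxx. Qed.

Lemma block_set_card0 P j m : #|block_set P j| = 0%N ->
  [&& mdeg m == d, tdeg m == j & P A@_m] = false.
Proof.
move/eqP; rewrite cards_eq0 => /eqP b0; apply/negbTE/negP => /and3P[/eqP dm tm Pm].
by have := mem_block_set P j dm; rewrite b0 inE tm Pm.
Qed.

Lemma block_set_card2 P j : #|block_set P j| = 2 -> exists m1 m2, m1 != m2 /\
  forall m, [&& mdeg m == d, tdeg m == j & P A@_m] = (m \in [:: m1; m2]).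
Proof.
move/eqP/cards2P=> -[b1 [b2 [b12 bE]]]; exists (val b1), (val b2); split => // m.
have [dm|dm] := eqVneq (mdeg m) d.
  by rewrite /= -(mem_block_set P j dm) bE !inE -!val_eqE /= bmnm_ofK ?dm.
have bd b : b \in block_set P j -> mdeg (val b) = d by rewrite inE => /andP[/andP[/eqP]].
rewrite !inE; apply/esym/norP; split; apply: contra_neq dm => ->;
  by apply: bd; rewrite bE !inE eqxx ?orbT.
Qed.

Lemma tdeg_add_first (i0 : 'I_n) m : val i0 = 0%N -> (tdeg m + m i0)%N = mdeg m.
Proof.
move=> i00; rewrite /tdeg mdegE [in RHS](bigD1 i0) //= addnC; congr (_ + _)%N.
by apply: eq_bigl => i; rewrite -val_eqE i00.
Qed.

Lemma block_x1deg (i0 : 'I_n) P j m : val i0 = 0%N ->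
  (forall m', A@_m' != 0 -> mdeg m' = d) -> (forall x, P x -> x != 0) -> (j <= d)%N ->
  [&& mdeg m == d, tdeg m == j & P A@_m] = (m i0 == d - j)%N && P A@_m.
Proof.
move=> i00 homA Pnz jd; have [Pm|] := boolP (P A@_m); rewrite ?andbF //.
have dm := homA _ (Pnz _ Pm); have := tdeg_add_first m i00.
by rewrite dm eqxx /= andbT => tdE; apply/idP/idP => /eqP h; apply/eqP; lia.
Qed.

End Blocks.

Theorem proposition5p2 (R : realFieldType) (n d : nat) (A : {mpoly R[n]}) :
  (4 <= n)%N -> (2 <= d)%N ->
  is_homog_deg d A ->
  ((\sum_(1 <= i < d.-1) Nblock d A i) + Nblock d A d = 0)%N ->
  Pblock d A d = 2%N ->
  Nblock d A d.-1 = 2%N ->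
  Jnonneg A ->
  (3 * n - 4 <= RJ d A)%N.
Proof.
move=> n4 d2 homA N0 P2 N2 Jnn.
have n_gt0 : (0 < n)%N by apply: leq_trans n4.
pose i0 : 'I_n := Ordinal n_gt0.
have suppA m : A@_m != 0 -> mdeg m = d by move=> Am; apply/eqP; apply: contraNT Am => /homA ->.
have x1E P j m := @block_x1deg R n d A i0 P j m erefl suppA.
have [m1 [m2 [m12 Pd]]] := block_set_card2 (P := fun x => 0 < x) P2.
have [n1 [n2 [_ Nd1]]] := block_set_card2 (P := fun x => x < 0) N2.
have Nd : Nblock d A d = 0%N by move/eqP: N0; rewrite addn_eq0 => /andP[_ /eqP].
have x1free_ge0 (m : 'X_{1..n}) : m i0 = 0%N -> 0 <= A@_m.
  move=> m0; rewrite leNgt; apply/negP => Am.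
  have := block_set_card0 (P := fun x => x < 0) m Nd.
  by rewrite (x1E (fun x => x < 0)) /= ?subnn ?m0 ?Am // => x /ltr0_neq0.
apply: (card_RJset_ge suppA x1free_ge0 _ m12 Jnn (n1 := n1) (n2 := n2) _ n4) => m.
  rewrite -Pd (x1E (fun x => 0 < x)) /= ?subnn //; last exact: lt0r_neq0.
  by case: eqP => //= m0; rewrite lt_def x1free_ge0 // andbT.
have d_pred : (d - d.-1)%N = 1%N by lia.
by rewrite -Nd1 (x1E (fun x => x < 0)) /= ?d_pred ?leq_pred //; apply: ltr0_neq0.
Qed.
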